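(* Let $p\ge3$ be a prime, let $c>0$, let $M=\lceil 2p^2\log p/(c\pi^2)\rceil$, and let $D$ be a probability distribution on $\mathbb{F}_p$ such that $D(x)\le1-c$ for each $x\in\mathbb{F}_p$. If $A\subset\mathbb{F}_p^n$ has density $\epsilon$ with respect to $D^n$, then the sumset $(p-1)MA$ has density at least $\epsilon^{(p-1)M}$ inside $\mathbb{F}_p^n$ with respect to the uniform distribution on $\mathbb{F}_p^n$.
   Context: $D^n$ is the distribution on $\mathbb{F}_p^n$ whose coordinates are independent with distribution $D$; the density of $A$ with respect to a distribution $\mu$ is $\sum_{x\in A}\mu(x)$. For a positive integer $K$, $KA=\{a_1+\dots+a_K:a_i\in A\}$ is the $K$-fold sumset. *)

From HB Require Import structures.
From mathcomp Require Import all_boot all_order all_algebra.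
From mathcomp Require Import all_classical all_reals all_analysis.
Set Implicit Arguments. Unset Strict Implicit. Unset Printing Implicit Defensive.
Import Order.TTheory GRing.Theory Num.Theory.
Local Open Scope ring_scope.

Definition sumset (p n K : nat) (A : {set 'rV['F_p]_n}) : {set 'rV['F_p]_n} :=
  [set x | [exists f : {ffun 'I_K -> 'rV['F_p]_n},
             [forall i, f i \in A] && (\sum_(i < K) f i == x)]].

Definition prod_dist (R : realType) (p n : nat) (D : 'F_p -> R) (x : 'rV['F_p]_n) : R :=
  \prod_(i < n) D (x ord0 i).

Definition density (R : realType) (p n : nat) (D : 'F_p -> R) (A : {set 'rV['F_p]_n}) : R :=
  \sum_(x in A) prod_dist D x.

Definition unif_density (R : realType) (p n : nat) (S : {set 'rV['F_p]_n}) : R :=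
  #|S|%:R / (p ^ n)%:R.

(* Slicing along the first coordinate reduces the bound
     p^n * prod_(i < K) D^n(B_i) <= |B_1 + ... + B_K|,   K = (p - 1) M,
   for arbitrary sets B_i (the theorem is the case B_i = A) to a one-dimensional
   functional inequality: if prod_i g_i(y_i) <= h(sum_i y_i) for all y, then
   p * prod_i E_D[g_i] <= sum_z h(z).
   For the latter, let g_i attain its maximum m_i at a_i and its second largest value
   r_i m_i at b_i.  Since D(a_i) <= 1 - c, E_D[g_i] <= m_i phi(r_i) with
   phi(r) = 1 - c + c r.  As (c M)^2 >= p, the product of the K factors phi(r_i) is at
   most (|S| + 1)/p * prod_(i in S) r_i for a set S of at most p - 1 indices, while the
   |S| nonzero steps b_i - a_i (i in S) have at least |S| + 1 distinct subset sums
   (a Cauchy-Davenport argument in F_p); h is at least prod_i m_i * prod_(i in S) r_i at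
   each of the corresponding points sum_i a_i + sum_(i in J) (b_i - a_i). *)

From HB Require Import structures.
From mathcomp Require Import all_boot all_order all_algebra.
From mathcomp Require Import all_classical all_reals all_analysis.
From mathcomp Require Import ring lra zify.

Set Implicit Arguments.
Unset Strict Implicit.
Unset Printing Implicit Defensive.

Import Order.TTheory GRing.Theory Num.Theory.
Import numFieldNormedType.Exports.
Local Open Scope ring_scope.

Section NumericBounds.
Variable R : realType.

Lemma taylor_pair_gt0 (x : R) k : 0 < x -> x ^+ 2 < k.+1%:R * k.+2%:R ->
  0 < x ^+ k / k`!%:R - x ^+ k.+2 / k.+2`!%:R.
Proof.
move=> x_gt0 x2_lt.
have k_gt0 : (0 : R) < k`!%:R by rewrite ltr0n fact_gt0.
have -> : x ^+ k / k`!%:R - x ^+ k.+2 / k.+2`!%:R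
    = x ^+ k / k`!%:R * (1 - x ^+ 2 / (k.+1%:R * k.+2%:R)).
  rewrite (factS k.+1) (factS k) !natrM [x ^+ k.+2]exprS [x ^+ k.+1]exprS.
  have k_ge0 : (0 : R) <= k%:R := ler0n _ _.
  by field; rewrite !lt0r_neq0 //; lra.
rewrite mulr_gt0 ?divr_gt0 ?exprn_gt0 // subr_gt0.
by rewrite ltr_pdivrMr ?mulr_gt0 ?ltr0n // mul1r.
Qed.

Lemma cos_8_5_lt0 : cos (8 / 5 : R) < 0.
Proof.
rewrite -oppr_gt0; have /cvgN cvg_cos := @cvg_cos_coeff' R (8 / 5).
rewrite -(cvg_lim (@Rhausdorff R) cvg_cos).
apply: (@lt_trans _ _ (\sum_(0 <= i < 3) - cos_coeff' (8 / 5 : R) i)).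
  do 3 rewrite big_nat_recl //; rewrite big_nil /cos_coeff' -!exprnP /=.
  rewrite !factS fact0 !expr0 !expr1 !exprS expr0; lra.
rewrite -seriesN lt_sum_lim_series //; first by move/cvgP: cvg_cos; rewrite seriesN.
move=> d; rewrite /cos_coeff' -!exprnP addnS doubleS.
have odd_sign : (-1 : R) ^+ (3 + d.*2) = -1.
  by rewrite -signr_odd oddD odd_double expr1.
rewrite exprS odd_sign !mulN1r mulNr !opprK mul1r.
apply: taylor_pair_gt0; first lra.
apply: (@lt_le_trans _ _ 56); first lra.
by rewrite -natrM ler_nat; nia.
Qed.

(* The library bound pi < 4 is too weak for p = 3 in p_le_sqr_cM below. *)
Lemma pi_le_16_5 : pi <= 16 / 5 :> R.
Proof.
rewrite leNgt; apply/negP => pi_gt.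
have : 0 < cos (8 / 5 : R).
  by apply: cos_gt0_pihalf; rewrite -ltr_norml ger0_norm; lra.
by have := cos_8_5_lt0; lra.
Qed.

Lemma ln3_ge1 : 1 <= ln (3 : R).
Proof.
have exp_e : expR (-1 / 10) ^+ 10 = expR (-1 : R).
  by rewrite -expRM_natr divfK.
have exp_low : (1 / 3 : R) <= expR (-1).
  rewrite -exp_e; apply: le_trans (lerXn2r _ _ _ (expR_ge1Dx _)); rewrite ?nnegrE ?expR_ge0; lra.
have exp1_le3 : expR (1 : R) <= 3.
  by have := expRxMexpNx_1 (1 : R); have := expR_gt0 (1 : R); nra.
by rewrite -[X in X <= _](expRK 1) ler_ln ?posrE ?expR_gt0.
Qed.

Lemma p_le_sqr_cM (p M : nat) (c : R) : (3 <= p)%N -> 0 < c ->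
  M%:Z = Num.ceil (2 * (p%:R) ^+ 2 * ln (p%:R) / (c * pi ^+ 2)) ->
  p%:R <= (c * M%:R) ^+ 2.
Proof.
move=> p_ge3 c_gt0 M_ceil.
have P3 : (3 : R) <= p%:R by rewrite ler_nat.
have lnp_ge1 : 1 <= ln (p%:R : R).
  by apply: le_trans (ln3_ge1) _; rewrite ler_ln ?posrE ?ltr0n //; lia.
have pi2_gt0 : 0 < pi ^+ 2 :> R by rewrite exprn_gt0 // pi_gt0.
have pi2_le : pi ^+ 2 <= (256 / 25 : R).
  by have := pi_le_16_5; have := pi_gt0 R; rewrite expr2; nra.
set P := (p%:R : R) ^+ 2; set L := ln (p%:R : R) in lnp_ge1 *.
set Q := pi ^+ 2 in pi2_gt0 pi2_le *.
have P_ge0 : 0 <= P by rewrite exprn_ge0.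
have cM_ge : 2 * P * L / Q <= c * M%:R.
  have := ceil_ge (2 * P * L / (c * Q)); rewrite -M_ceil.
  rewrite ler_pdivrMr ?ler_pdivrMr ?(mulr_gt0 c_gt0 pi2_gt0) // => h.
  apply: le_trans h _.
  by rewrite mulrA [M%:R * c]mulrC.
have cM_ge' : 25 * P / 128 <= c * M%:R.
  apply: le_trans cM_ge; rewrite ler_pdivlMr //.
  have := ler_wpM2l P_ge0 pi2_le; have := ler_wpM2l P_ge0 lnp_ge1; lra.
apply: le_trans (lerXn2r _ _ _ cM_ge'); rewrite ?nnegrE; try lra.
have p3_ge27 : 27 <= (p%:R : R) ^+ 3 by rewrite !exprS expr0; nra.
by rewrite /P !expr2; rewrite !exprS expr0 in p3_ge27; nra.
Qed.

End NumericBounds.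

Lemma bernoulli_le (R : realFieldType) (t : R) n : 0 <= t -> 1 + n%:R * t <= (1 + t) ^+ n.
Proof.
move=> t_ge0; elim: n => [|n IH]; first by rewrite mul0r addr0 expr0.
have : 0 <= (1 + t) ^+ n by rewrite exprn_ge0 // addr_ge0.
have : 0 <= n%:R * t by rewrite mulr_ge0.
by rewrite exprS -natr1; nra.
Qed.

Lemma mul_expr_le_subn (R : realFieldType) (p m : nat) (t : R) : (2 < p)%N -> 0 <= t ->
  p%:R * t ^+ 2 <= 1 -> (m <= p - 1)%N -> p%:R * t ^+ m <= (p - m)%:R.
Proof.
move=> p_ge3 t_ge0 pt2_le1 m_le; rewrite natrB; last by lia.
have P3 : (3 : R) <= p%:R by rewrite ler_nat.
have t_le1 : t <= 1 by rewrite expr2 in pt2_le1; nra.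
case: m m_le => [|[|m]] m_le.
- by rewrite expr0 mulr1 subr0.
- by rewrite expr1; rewrite expr2 in pt2_le1; nra.
- have tm_le : t ^+ m.+2 <= t ^+ 2 by rewrite !exprS ler_wpM2l ?ler_wpM2l ?exprn_ile1 ?mulr1.
  have m2_le : (m.+2%:R : R) <= p%:R - 1.
    by rewrite -(natrB _ (ltnW (ltnW p_ge3))) ler_nat; lia.
  by have := ler_wpM2l (ler0n _ p) tm_le; lra.
Qed.

Lemma exists_top_set (T : finType) (R : realDomainType) (r : T -> R) k :
  (k <= #|T|)%N -> exists2 J : {set T}, #|J| = k & forall i j, i \in J -> j \notin J -> r j <= r i.
Proof.
move=> k_le.
have : (0 < #|[set J : {set T} | #|J| == k]|)%N by rewrite card_draws bin_gt0.
case/card_gt0P => J0; rewrite inE => J0_card.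
have [J /eqP J_card J_max] := @arg_maxP _ _ _ J0 (fun J : {set T} => #|J| == k)
  (fun J => \sum_(i in J) r i) J0_card.
exists J => // i j iJ jJ.
have swap_card : #|j |: (J :\ i)| == k.
  by rewrite cardsU1 !inE negb_and jJ orbT (cardsD1 i J) iJ in J_card *; apply/eqP; lia.
have := J_max _ swap_card.
by rewrite big_setU1 ?(big_setD1 i iJ) /= ?lerD2r // !inE negb_and jJ orbT.
Qed.

Lemma divr_in01 (R : numFieldType) (x y : R) : 0 <= x -> x <= y -> 0 <= x / y <= 1.
Proof.
move=> x_ge0 x_le_y; rewrite divr_ge0 ?(le_trans x_ge0) //=.
have [-> | y_neq0] := eqVneq y 0; first by rewrite invr0 mulr0 ler01.
by rewrite ler_pdivrMr ?mul1r // lt_def y_neq0 (le_trans x_ge0).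
Qed.

Lemma mulr_divr_le (R : numFieldType) (x y : R) : 0 <= x -> x <= y -> y * (x / y) = x.
Proof.
move=> x_ge0 x_le_y; have [y0 | y_neq0] := eqVneq y 0; last by rewrite mulrC divfK.
by apply/eqP; rewrite y0 mul0r eq_le x_ge0 -y0 x_le_y.
Qed.

Lemma prodr_le_subset (T : finType) (R : realDomainType) (r : T -> R) (J S : {set T}) :
  (forall i, 0 <= r i <= 1) -> J \subset S -> \prod_(i in S) r i <= \prod_(i in J) r i.
Proof.
move=> r01 JS; rewrite [leLHS]big_mkcond [leRHS]big_mkcond /=.
apply: ler_prod => i _; have /andP[r_ge0 r_le1] := r01 i.
have [iJ | _] := boolP (i \in J); first by rewrite (fintype.subsetP JS) ?lexx ?r_ge0.
by case: (i \in S); rewrite ?r01 ?ler01 ?lexx.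
Qed.

Lemma card_mul_le_sum (T : finType) (R : realDomainType) (B : {set T}) (f : T -> R) x :
  (forall z, 0 <= f z) -> (forall z, z \in B -> x <= f z) -> #|B|%:R * x <= \sum_z f z.
Proof.
move=> f_ge0 x_le; rewrite mulr_natl -sumr_const.
apply: le_trans (ler_sum _ x_le) _.
by rewrite [leRHS](bigID (mem B)) /= lerDl sumr_ge0.
Qed.

Section TopTwo.
Variables (p : nat) (R : realDomainType) (g : 'F_p -> R).

Definition top : 'F_p := [arg max_(x > 0) g x]%O.

Definition runner_up : 'F_p := [arg max_(x > top + 1 | x != top) g x]%O.

Lemma top_max x : g x <= g top.
Proof. by rewrite /top; case: arg_maxP => // y _; apply. Qed.

Let top1_neq : top + 1 != top.
Proof. by rewrite -[X in _ != X]addr0 (inj_eq (addrI _)) oner_eq0. Qed.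

Lemma runner_up_neq : runner_up != top.
Proof. by rewrite /runner_up; case: arg_maxP. Qed.

Lemma runner_up_max x : x != top -> g x <= g runner_up.
Proof. by rewrite /runner_up; case: arg_maxP => // y _; apply. Qed.

End TopTwo.

Section SubsetSums.
Variable p : nat.

Definition subset_sums (T : finType) (d : T -> 'F_p) (S : {set T}) : {set 'F_p} :=
  [set \sum_(i in J) d i | J : {set T} in powerset S].

Lemma Fp_mulrn_of_neq0 (d x : 'F_p) : d != 0 -> x = d *+ (x / d).
Proof. by move=> d_neq0; rewrite -mulr_natr natr_Zp mulrC divfK. Qed.

Lemma translate_stable_setT (Z : {set 'F_p}) (d : 'F_p) : d != 0 -> Z != finset.set0 ->
  [set z + d | z in Z] \subset Z -> Z = [set: 'F_p].
Proof.
move=> d_neq0 /set0Pn [z zZ] /fintype.subsetP Z_stable.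
have zdZ n : z + d *+ n \in Z.
  elim: n => [|n IH]; first by rewrite addr0.
  by rewrite mulrS addrCA addrC Z_stable //; apply: imset_f.
by apply/setP => x; rewrite inE -[x](subrK z) addrC (Fp_mulrn_of_neq0 (x - z) d_neq0) zdZ.
Qed.

Lemma card_translate_setU_gt (Z : {set 'F_p}) (d : 'F_p) :
  d != 0 -> Z != finset.set0 -> Z != [set: 'F_p] ->
  (#|Z| < #|Z :|: [set (z + d)%R | z in Z]|)%N.
Proof.
move=> d_neq0 Z_neq0 Z_neqT; apply/proper_card/properUl.
by apply/negP => /(translate_stable_setT d_neq0 Z_neq0) Z_T; rewrite Z_T eqxx in Z_neqT.
Qed.

Lemma subset_sums_setD1 (T : finType) (d : T -> 'F_p) (S : {set T}) x : x \in S ->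
  subset_sums d (S :\ x) :|: [set z + d x | z in subset_sums d (S :\ x)]
    \subset subset_sums d S.
Proof.
move=> xS; apply/fintype.subsetP => z.
rewrite inE => /orP[/imsetP[J JS ->] | /imsetP[w /imsetP[J JS ->] ->]];
  move: JS; rewrite powersetE => JS.
  by apply: imset_f; rewrite powersetE (fintype.subset_trans JS) ?subsetDl.
have xJ : x \notin J by apply/negP => /(fintype.subsetP JS); rewrite setD11.
apply/imsetP; exists (x |: J); last by rewrite big_setU1 //= addrC.
by rewrite powersetE -(finset.setD1K xS) finset.setUS.
Qed.

Hypothesis p_prime : prime p.

Lemma card_subset_sums (T : finType) (d : T -> 'F_p) (S : {set T}) :
  (#|S| <= p - 1)%N -> {in S, forall i, d i != 0} -> (#|S|.+1 <= #|subset_sums d S|)%N.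
Proof.
move=> S_le d_neq0; have [n S_card] : exists n, #|S| = n by exists #|S|.
elim: n S S_card S_le d_neq0 => [|n IH] S S_card S_le d_neq0.
  rewrite S_card; apply/card_gt0P; exists 0; apply/imsetP; exists finset.set0.
    by rewrite powersetE finset.sub0set.
  by rewrite big_set0.
have [x xS] : exists x, x \in S by apply/card_gt0P; rewrite S_card.
have S'_card : #|S :\ x| = n by move: S_card; rewrite (cardsD1 x) xS => -[].
set Z := subset_sums d (S :\ x).
have Z_ge : (n.+1 <= #|Z|)%N.
  rewrite -S'_card; apply: IH => [//||i /setD1P[_ /d_neq0 //]].
  by rewrite S'_card; lia.
rewrite S_card; apply: leq_trans (subset_leq_card (subset_sums_setD1 d xS)); rewrite -/Z.
have [Z_T | Z_neqT] := eqVneq Z [set: 'F_p].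
  apply: leq_trans (subset_leq_card (finset.subsetUl _ _)).
  by rewrite Z_T cardsT card_Fp //; lia.
have Z_neq0 : Z != finset.set0 by rewrite -card_gt0; lia.
exact: leq_ltn_trans Z_ge (card_translate_setU_gt (d_neq0 x xS) Z_neq0 Z_neqT).
Qed.

End SubsetSums.

Lemma sum_row_mx (V : nmodType) (I : Type) (r : seq I) (P : pred I) m n1 n2
    (A : I -> 'M[V]_(m, n1)) (B : I -> 'M[V]_(m, n2)) :
  \sum_(i <- r | P i) row_mx (A i) (B i) =
  row_mx (\sum_(i <- r | P i) A i) (\sum_(i <- r | P i) B i).
Proof.
by elim/big_rec3: _ => [|i x a b _ ->]; rewrite ?row_mx0 ?add_row_mx.
Qed.

Definition sumset_fam (p n K : nat) (B : 'I_K -> {set 'rV['F_p]_n}) : {set 'rV['F_p]_n} :=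
  [set x | [exists f : {ffun 'I_K -> 'rV['F_p]_n},
             [forall i, f i \in B i] && (\sum_(i < K) f i == x)]].

Section Slices.
Variables p n : nat.

Definition slice (B : {set 'rV['F_p]_(1 + n)}) (y : 'F_p) : {set 'rV['F_p]_n} :=
  [set v | row_mx (const_mx y) v \in B].

Lemma sum_row_mx_const (V : nmodType) (F : 'rV['F_p]_(1 + n) -> V) :
  \sum_x F x = \sum_(y : 'F_p) \sum_(v : 'rV['F_p]_n) F (row_mx (const_mx y) v).
Proof.
rewrite pair_big /= (reindex (fun yv : 'F_p * 'rV_n => row_mx (const_mx yv.1) yv.2)) //=.
exists (fun x : 'rV_(1 + n) => (x 0 (lshift n 0), rsubmx x)) => [[y v] _ | x _] /=.
  by rewrite row_mxEl row_mxKr mxE.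
rewrite -[RHS]hsubmxK; congr row_mx.
by apply/matrixP => i j; rewrite !ord1 !mxE.
Qed.

Lemma card_slice (R : numDomainType) (B : {set 'rV['F_p]_(1 + n)}) :
  #|B|%:R = \sum_(y : 'F_p) #|slice B y|%:R :> R.
Proof.
rewrite -sum1_card natr_sum big_mkcond /= sum_row_mx_const.
under [RHS]eq_bigr => y _ do rewrite -sum1_card natr_sum big_mkcond /=.
by apply: eq_bigr => y _; apply: eq_bigr => v _; rewrite inE.
Qed.

Lemma prod_dist_row_mx (R : realType) (D : 'F_p -> R) y (v : 'rV['F_p]_n) :
  prod_dist D (row_mx (const_mx y) v : 'rV_(1 + n)) = D y * prod_dist D v.
Proof.
rewrite /prod_dist big_split_ord big_ord1 row_mxEl mxE.
by under eq_bigr do rewrite row_mxEr.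
Qed.

Lemma density_slice (R : realType) (D : 'F_p -> R) (B : {set 'rV['F_p]_(1 + n)}) :
  density D B = \sum_(y : 'F_p) D y * density D (slice B y).
Proof.
rewrite /density big_mkcond sum_row_mx_const.
under [RHS]eq_bigr => y _ do rewrite big_distrr big_mkcond /=.
apply: eq_bigr => y _; apply: eq_bigr => v _.
by rewrite inE prod_dist_row_mx; case: (_ \in B); rewrite ?mulr0.
Qed.

Lemma slice_sumset_fam K (B : 'I_K -> {set 'rV['F_p]_(1 + n)}) (y : 'I_K -> 'F_p) :
  sumset_fam (fun i => slice (B i) (y i)) \subset slice (sumset_fam B) (\sum_i y i).
Proof.
apply/fintype.subsetP => v; rewrite !inE => /existsP[f /andP[/forallP f_in /eqP <-]].
apply/existsP; exists [ffun i => row_mx (const_mx (y i)) (f i)]; apply/andP; split.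
  by apply/forallP => i; rewrite ffunE; have := f_in i; rewrite inE.
under eq_bigr do rewrite ffunE.
rewrite sum_row_mx; apply/eqP; congr row_mx.
by rewrite raddf_sum.
Qed.

End Slices.

Lemma prod_card_le_card_sumset_fam0 (p K : nat) (B : 'I_K -> {set 'rV['F_p]_0}) :
  (\prod_i #|B i| <= #|sumset_fam B|)%N.
Proof.
have rV0_eq (x y : 'rV['F_p]_0) : x = y by apply/matrixP => ? [].
have [i /eqP Bi0 | B_neq0] := pickP (fun i => B i == finset.set0).
  by rewrite (bigD1 i) //= Bi0 cards0.
have B_card i : #|B i| = 1%N.
  apply/eqP; rewrite eqn_leq card_gt0 B_neq0 andbT.
  by apply: leq_trans (max_card _) _; rewrite card_mx.
rewrite big1 // card_gt0; apply/set0Pn; exists 0; rewrite /sumset_fam inE.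
apply/existsP; exists 0; apply/andP; split; last by apply/eqP/rV0_eq.
apply/forallP => i; have /set0Pn[x xB] : B i != finset.set0 by rewrite -card_gt0 B_card.
by rewrite (rV0_eq ((0 : {ffun 'I_K -> 'rV['F_p]_0}) i) x).
Qed.

Section SumsetDensity.
Variables (R : realType) (p M : nat) (c : R) (D : 'F_p -> R).
Hypotheses (p_prime : prime p) (p_gt2 : (2 < p)%N) (c_gt0 : 0 < c) (c_le1 : c <= 1).
Hypothesis p_le_sqr_cM : p%:R <= (c * M%:R) ^+ 2.
Hypotheses (D_ge0 : forall x, 0 <= D x) (D_sum1 : \sum_x D x = 1).
Hypothesis D_le : forall x, D x <= 1 - c.

Local Notation K := ((p - 1) * M)%N.

(* phi r bounds E_D[g] for g <= 1 with g = 1 at one point and g <= r elsewhere. *)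
Definition phi (x : R) := 1 - c + c * x.

Local Notation theta := (c * M%:R)^-1.

Let cM_gt0 : 0 < c * M%:R.
Proof.
rewrite lt_def mulr_ge0 ?ler0n ?(ltW c_gt0) // andbT.
apply: contraTneq p_le_sqr_cM => ->; rewrite expr0n /= -ltNge ltr0n; lia.
Qed.

Let M_gt0 : (0 < M)%N.
Proof. by rewrite -(ltr0n R); move: cM_gt0; rewrite pmulr_rgt0. Qed.

Let theta_gt0 : 0 < theta. Proof. by rewrite invr_gt0. Qed.

Let p_theta2_le1 : p%:R * theta ^+ 2 <= 1.
Proof. by rewrite exprVn ler_pdivrMr ?exprn_gt0 // mul1r. Qed.

Lemma phi_ge0 (x : R) : 0 <= x -> 0 <= phi x.
Proof.
by move=> x_ge0; have := mulr_ge0 (ltW c_gt0) x_ge0; have := c_le1; rewrite /phi; lra.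
Qed.

Lemma phi_le (x y : R) : x <= y -> phi x <= phi y.
Proof. by move=> le_xy; rewrite /phi lerD2l ler_pM2l. Qed.

Lemma phi_expM_le (x : R) : theta <= x -> x <= 1 -> phi x ^+ M <= x.
Proof.
move=> theta_le_x x_le1.
have cMx_ge1 : 1 <= c * M%:R * x by rewrite -ler_pdivrMl // mulr1.
have x_gt0 : 0 < x := lt_le_trans theta_gt0 theta_le_x.
set u := 1 - x; have u_ge0 : 0 <= u by rewrite subr_ge0.
have cMu_ge0 := mulr_ge0 (ltW cM_gt0) u_ge0.
have cu_ge0 := mulr_ge0 (ltW c_gt0) u_ge0.
have cu_le1 : c * u <= 1.
  by rewrite -[1]mulr1 ler_pM // ?ltW //; rewrite /u; lra.
have -> : phi x = 1 - c * u by rewrite /phi /u; ring.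
rewrite -(ler_pM2r (_ : 0 < 1 + c * M%:R * u)); last by lra.
apply: (@le_trans _ _ ((1 - c * u) ^+ M * (1 + c * u) ^+ M)).
  rewrite ler_wpM2l ?exprn_ge0 ?subr_ge0 //.
  by apply: le_trans (bernoulli_le M cu_ge0); rewrite mulrA [M%:R * c]mulrC.
apply: (@le_trans _ _ 1); last by rewrite /u; nra.
by rewrite -exprMn exprn_ile1 //; nra.
Qed.

Lemma prod_phi_le (r : 'I_K -> R) (S : {set 'I_K}) (t : R) :
  (forall i, 0 <= r i <= 1) -> theta <= t -> t <= 1 ->
  (forall k, k \notin S -> r k <= t) -> (forall i, i \in S -> t <= r i) ->
  (#|S| <= p - 1)%N ->
  \prod_i phi (r i) <= t ^+ (p - 1 - #|S|) * \prod_(i in S) r i.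
Proof.
(* Of the K - |S| factors outside S, M - 1 are charged to each i in S, making
   phi (r i) ^+ M <= r i; the remaining (p - 1 - |S|) M give t ^+ (p - 1 - |S|). *)
move=> r01 theta_le_t t_le1 r_out r_in S_le.
have r_ge0 i : 0 <= r i by case/andP: (r01 i).
have t_ge0 : 0 <= t := le_trans (ltW theta_gt0) theta_le_t.
have phi_r_ge0 i : 0 <= phi (r i) := phi_ge0 (r_ge0 i).
have phi_t_ge0 : 0 <= phi t := phi_ge0 t_ge0.
set s := #|S|.
have out_le : \prod_(i in ~: S) phi (r i) <= phi t ^+ (s * (M - 1) + (p - 1 - s) * M).
  have -> : (s * (M - 1) + (p - 1 - s) * M = #|~: S|)%N.
    by have := cardsC S; rewrite card_ord -/s; nia.
  rewrite -prodr_const; apply: ler_prod => i; rewrite inE => iS.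
  by rewrite phi_r_ge0 phi_le ?r_out.
have in_le : phi t ^+ (s * (M - 1)) <= \prod_(i in S) phi (r i) ^+ (M - 1).
  rewrite mulnC exprM -prodr_const; apply: ler_prod => i iS.
  by rewrite exprn_ge0 //= lerXn2r ?nnegrE ?phi_le ?r_in.
have in_M : \prod_(i in S) (phi (r i) * phi (r i) ^+ (M - 1)) <= \prod_(i in S) r i.
  apply: ler_prod => i iS; rewrite mulr_ge0 ?exprn_ge0 //= -exprS subn1 prednK //.
  apply: phi_expM_le; first exact: le_trans theta_le_t (r_in i iS).
  by case/andP: (r01 i).
have out_M : phi t ^+ ((p - 1 - s) * M) <= t ^+ (p - 1 - s).
  by rewrite mulnC exprM lerXn2r ?nnegrE ?exprn_ge0 ?phi_expM_le.
rewrite (bigID (mem S)) /= [X in _ * X](eq_bigl (fun i => i \in ~: S)) => [|i]; last first.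
  by rewrite inE.
have prod_phi_ge0 : 0 <= \prod_(i in S) phi (r i) by apply: prodr_ge0.
apply: le_trans (ler_wpM2l prod_phi_ge0 out_le) _.
rewrite exprD mulrA [_ * \prod_(i in S) r i]mulrC.
apply: ler_pM out_M; rewrite ?mulr_ge0 ?exprn_ge0 ?prodr_ge0 //.
by apply: le_trans in_M; rewrite big_split /= ler_wpM2l ?prodr_ge0.
Qed.

Lemma exists_threshold_set (r : 'I_K -> R) : (forall i, r i <= 1) ->
  exists S : {set 'I_K}, exists t : R,
    [/\ theta <= t <= 1, forall k, k \notin S -> r k <= t, forall i, i \in S -> t <= r i,
        (#|S| <= p - 1)%N & p%:R * t ^+ (p - 1 - #|S|) <= #|S|.+1%:R].
Proof.
move=> r_le1.
have theta_le1 : theta <= 1.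
  rewrite -(@expr_le1 _ 2) //; last exact: ltW.
  apply: le_trans p_theta2_le1.
  by rewrite ler_peMl ?exprn_ge0 ?(ltW theta_gt0) // ler1n; lia.
(* Either few r i reach theta and S collects them, or S is a set of p - 1 largest r i. *)
set G := [set i | theta <= r i].
have [G_le | G_gt] := leqP #|G| (p - 1).
  exists G, theta; split => //; first by rewrite lexx.
  - by move=> k; rewrite inE -ltNge => /ltW.
  - by move=> i; rewrite inE.
  have := mul_expr_le_subn p_gt2 (ltW theta_gt0) p_theta2_le1 (leq_subr #|G| (p - 1)).
  by rewrite (_ : p - (p - 1 - #|G|) = #|G|.+1)%N //; lia.
have [J J_card J_top] : exists2 J : {set 'I_K}, #|J| = (p - 1)%N &
    forall i j, i \in J -> j \notin J -> r j <= r i.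
  by apply: exists_top_set; rewrite card_ord leq_pmulr.
have [j0 j0J] : exists j0, j0 \in J by apply/card_gt0P; rewrite J_card; lia.
have [i0 i0J i0_min] := @arg_minP _ _ _ j0 (mem J) r j0J.
have [g gG gJ] : exists2 g, g \in G & g \notin J.
  apply/exists_inP; rewrite -negb_forall_in; apply: contraTN G_gt => /forall_inP G_J.
  rewrite -leqNgt; apply: leq_trans (subset_leq_card _) (eq_leq J_card).
  exact/fintype.subsetP.
exists J, (r i0); split; rewrite ?J_card ?subnn ?expr0 ?mulr1 ?r_le1 ?andbT //.
- by apply: le_trans (J_top _ _ i0J gJ); rewrite inE in gG.
- by move=> k kJ; apply: J_top.
- by rewrite ler_nat; lia.
Qed.

Lemma exists_set_prod_phi_le (r : 'I_K -> R) : (forall i, 0 <= r i <= 1) ->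
  exists2 S : {set 'I_K}, (#|S| <= p - 1)%N &
    p%:R * \prod_i phi (r i) <= #|S|.+1%:R * \prod_(i in S) r i.
Proof.
move=> r01; have r_le1 i : r i <= 1 by case/andP: (r01 i).
have [S [t [/andP[theta_le_t t_le1] r_out r_in S_le p_t_le]]] := exists_threshold_set r_le1.
exists S => //; have prod_r_ge0 : 0 <= \prod_(i in S) r i.
  by apply: prodr_ge0 => i _; case/andP: (r01 i).
apply: le_trans (ler_wpM2l (ler0n _ p) (prod_phi_le r01 theta_le_t t_le1 r_out r_in S_le)) _.
by rewrite mulrA ler_wpM2r.
Qed.

Lemma expectation_le_two_point (g : 'F_p -> R) (a : 'F_p) (s : R) :
  (forall x, g x <= g a) -> (forall x, x != a -> g x <= s) -> s <= g a ->
  \sum_x D x * g x <= (1 - c) * g a + c * s.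
Proof.
move=> g_le_ga g_le_s s_le_ga.
have rest_le : \sum_(x | x != a) D x * g x <= (1 - D a) * s.
  have -> : 1 - D a = \sum_(x | x != a) D x.
    by apply/eqP; rewrite subr_eq -D_sum1 (bigD1 a) //= addrC.
  by rewrite big_distrl /=; apply: ler_sum => x xa; rewrite ler_wpM2l ?g_le_s.
rewrite (bigD1 a) //=; apply: le_trans (lerD (lexx _) rest_le) _.
have : 0 <= (1 - c - D a) * (g a - s) by rewrite mulr_ge0 ?subr_ge0 ?D_le.
by lra.
Qed.

Lemma expectation_le_phi (g : 'F_p -> R) : (forall y, 0 <= g y) ->
  \sum_x D x * g x <= g (top g) * phi (g (runner_up g) / g (top g)).
Proof.
move=> g_ge0; have gb_le := top_max g (runner_up g).
(* If g (top g) = 0, the ratio is 0 since x / 0 = 0, and mulr_divr_le still applies. *)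
rewrite /phi mulrDr mulrCA mulr_divr_le ?g_ge0 // mulrC.
by apply: expectation_le_two_point => //; [exact: top_max | exact: runner_up_max].
Qed.

Lemma prod_expectation_le_sum (g : 'I_K -> 'F_p -> R) (h : 'F_p -> R) :
  (forall i y, 0 <= g i y) -> (forall z, 0 <= h z) ->
  (forall y : {ffun 'I_K -> 'F_p}, \prod_i g i (y i) <= h (\sum_i y i)) ->
  p%:R * \prod_i (\sum_x D x * g i x) <= \sum_z h z.
Proof.
move=> g_ge0 h_ge0 g_h.
pose a i := top (g i); pose b i := runner_up (g i); pose m i := g i (a i).
pose r i := g i (b i) / m i.
have r01 i : 0 <= r i <= 1 := divr_in01 (g_ge0 _ _) (top_max (g i) (b i)).
have gb_eq i : g i (b i) = m i * r i by rewrite mulr_divr_le ?g_ge0 ?top_max.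
have [S S_le S_prod] := exists_set_prod_phi_le r01.
pose d i := b i - a i; pose A := \sum_i a i.
pose X := \prod_i m i * \prod_(i in S) r i.
have X_ge0 : 0 <= X.
  by apply: mulr_ge0; apply: prodr_ge0 => i _; [exact: g_ge0 | case/andP: (r01 i)].
have h_ge z : z \in subset_sums d S -> X <= h (A + z).
  case/imsetP => J; rewrite powersetE => JS ->.
  pose y := [ffun i => if i \in J then b i else a i].
  have -> : A + \sum_(i in J) d i = \sum_i y i.
    rewrite [X in _ + X]big_mkcond -big_split /=; apply: eq_bigr => i _.
    by rewrite ffunE /d; case: (i \in J); rewrite ?addr0 // addrCA subrr addr0.
  apply: le_trans (g_h y).
  have -> : \prod_i g i (y i) = \prod_i m i * \prod_(i in J) r i.
    rewrite [X in _ * X]big_mkcond -big_split /=; apply: eq_bigr => i _.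
    by rewrite ffunE; case: (i \in J); rewrite ?mulr1 // gb_eq.
  by rewrite ler_wpM2l ?prodr_le_subset //; apply: prodr_ge0 => i _; apply: g_ge0.
have card_le : (#|S|.+1 <= #|subset_sums d S|)%N.
  by apply: card_subset_sums => // i _; rewrite subr_eq0 runner_up_neq.
apply: (@le_trans _ _ (\prod_i m i * (p%:R * \prod_i phi (r i)))).
  rewrite mulrCA -big_split /= ler_wpM2l //; apply: ler_prod => i _.
  by rewrite expectation_le_phi // andbT sumr_ge0 // => x _; rewrite mulr_ge0.
apply: (@le_trans _ _ (#|S|.+1%:R * X)).
  by rewrite /X [leRHS]mulrCA ler_wpM2l // prodr_ge0 // => i _; apply: g_ge0.
apply: le_trans (ler_wpM2r X_ge0 (_ : #|S|.+1%:R <= #|subset_sums d S|%:R)) _.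
  by rewrite ler_nat.
by rewrite (reindex_inj (addrI A)); apply: card_mul_le_sum.
Qed.

Lemma density_ge0 n (B : {set 'rV['F_p]_n}) : 0 <= density D B.
Proof. by apply: sumr_ge0 => x _; apply: prodr_ge0 => i _; apply: D_ge0. Qed.

Lemma density_rV0 (B : {set 'rV['F_p]_0}) : density D B = #|B|%:R.
Proof.
by rewrite /density (eq_bigr (fun=> 1)) ?sumr_const // => x _; rewrite /prod_dist big_ord0.
Qed.

Lemma density_prod_le_card_sumset_fam n (B : 'I_K -> {set 'rV['F_p]_n}) :
  (p ^ n)%:R * \prod_i density D (B i) <= #|sumset_fam B|%:R.
Proof.
elim: n B => [|n IH] B.
  rewrite expn0 mul1r; under eq_bigr do rewrite density_rV0.
  by rewrite -natr_prod ler_nat prod_card_le_card_sumset_fam0.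
have pn_gt0 : (0 : R) < (p ^ n)%:R by rewrite ltr0n expn_gt0 prime_gt0.
pose h (y : 'F_p) : R := #|slice (sumset_fam B) y|%:R / (p ^ n)%:R.
have g_h (y : {ffun 'I_K -> 'F_p}) :
    \prod_i density D (slice (B i) (y i)) <= h (\sum_i y i).
  rewrite ler_pdivlMr // mulrC; apply: le_trans (IH (fun i => slice (B i) (y i))) _.
  by rewrite ler_nat subset_leq_card // slice_sumset_fam.
have h_ge0 z : 0 <= h z by rewrite /h divr_ge0 // ltW.
have := prod_expectation_le_sum (fun i y => density_ge0 (slice (B i) y)) h_ge0 g_h.
under eq_bigr do rewrite -density_slice.
rewrite /h -mulr_suml -card_slice ler_pdivlMr // => le_card.
by rewrite expnSr natrM -mulrA mulrC.
Qed.

End SumsetDensity.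

Theorem proposition3p4 (R : realType) (p : nat) (c : R) (M n : nat)
  (D : 'F_p -> R) (A : {set 'rV['F_p]_n}) (eps : R) :
  prime p -> (3 <= p)%N -> 0 < c ->
  (M%:Z = Num.ceil (2 * (p%:R) ^+ 2 * ln (p%:R) / (c * pi ^+ 2))) ->
  (forall x, 0 <= D x) -> \sum_(x : 'F_p) D x = 1 ->
  (forall x, D x <= 1 - c) ->
  density D A = eps ->
  eps ^+ ((p - 1) * M) <= unif_density R (sumset ((p - 1) * M) A).
Proof.
move=> p_prime p_ge3 c_gt0 M_ceil D_ge0 D_sum1 D_le <-.
have c_le1 : c <= 1 by have := D_ge0 0; have := D_le 0; lra.
have := density_prod_le_card_sumset_fam p_prime p_ge3 c_gt0 c_le1
  (p_le_sqr_cM p_ge3 c_gt0 M_ceil) D_ge0 D_sum1 D_le (fun _ => A).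
rewrite prodr_const card_ord /unif_density ler_pdivlMr ?ltr0n ?expn_gt0 ?prime_gt0 //.
by rewrite mulrC.
Qed.
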